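(* Let $V$ be a finite set of nails, let $g_1, g_2$ be specifications on $V$, and let $h_1, h_2 \in F(V)$ be words with $h_1$ solving $g_1$ and $h_2$ solving $g_2$ (the supports of $h_1,h_2$ may overlap). Suppose that for every $S \subseteq V$ with $g_1(S) = g_2(S) = \mathsf{hang}$ there exists $S'$ with $S \subseteq S' \subseteq V$ and $g_1(S') \ne g_2(S')$. Then $h_1 + h_2$ solves $g_1 \wedge g_2$, and $[h_1,h_2] = h_1 + h_2 - h_1 - h_2$ solves $g_1 \vee g_2$. Moreover, the hypothesis holds automatically when $V = V_1 \sqcup V_2$ and $g_i(S) = f_i(S \cap V_i)$ for specifications $f_i$ on $V_i$ ($i=1,2$).
   Context: Words are elements of the free group $F(V)$ on a finite set $V$ of nails, written additively ($+$ group operation, $-$ inverse, $0$ identity). For $S \subseteq V$, $h|_S$ is the image of $h$ under the homomorphism killing the generators in $S$. A specification on $V$ is a monotone function $f: 2^V \to \{\mathsf{hang}, \mathsf{fall}\}$ with $f(V) = \mathsf{fall}$, where $\mathsf{hang} < \mathsf{fall}$ and monotone means $S \subseteq S' \Rightarrow f(S) \le f(S')$. A word $h$ solves $f$ if for every $S \subseteq V$: $h|_S = 0 \iff f(S) = \mathsf{fall}$. The operations $\vee$, $\wedge$ on specifications are pointwise $\max$, $\min$ with respect to $\mathsf{hang} < \mathsf{fall}$. *)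

From mathcomp Require Import all_boot.
Set Implicit Arguments. Unset Strict Implicit. Unset Printing Implicit Defensive.

Section FreeGroup.
Variable V : finType.

(* A letter is a generator v (true) or its inverse -v (false). *)
Definition letter := (V * bool)%type.
(* Words over V^{+-1}; an element of the free group F(V) is represented by
   any word, two words representing the same element iff they have the same
   free reduction. *)
Definition word := seq letter.

Definition linv (x : letter) : letter := (x.1, ~~ x.2).

Definition red_step (st : word) (x : letter) : word :=
  if st is y :: st' then (if y == linv x then st' else x :: st) else [:: x].
Definition reduce (w : word) : word := rev (foldl red_step [::] w).

Definition fzero (w : word) : bool := reduce w == [::].

Definition fadd (w1 w2 : word) : word := w1 ++ w2.
Definition fopp (w : word) : word := rev (map linv w).
Definition fcomm (h1 h2 : word) : word :=
  fadd (fadd (fadd h1 h2) (fopp h1)) (fopp h2).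

(* h|_S : image of h under the homomorphism killing the generators in S *)
Definition frestr (h : word) (S : {set V}) : word :=
  filter (fun x : letter => x.1 \notin S) h.

(* Specifications: hang = false, fall = true, so hang < fall is false < true. *)
Definition hang := false.
Definition fall := true.

Definition is_spec (f : {set V} -> bool) : Prop :=
  (forall S S' : {set V}, S \subset S' -> f S <= f S') /\ f setT = fall.

Definition is_spec_on (W : {set V}) (f : {set V} -> bool) : Prop :=
  (forall S S' : {set V}, S \subset S' -> S' \subset W -> f S <= f S') /\
  f W = fall.

Definition solves (h : word) (f : {set V} -> bool) : Prop :=
  forall S : {set V}, fzero (frestr h S) = (f S == fall).

Definition spec_meet (f g : {set V} -> bool) S := f S && g S.
Definition spec_join (f g : {set V} -> bool) S := f S || g S.

Definition sep_hyp (g1 g2 : {set V} -> bool) : Prop :=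
  forall S : {set V}, g1 S = hang -> g2 S = hang ->
    exists S' : {set V}, S \subset S' /\ g1 S' != g2 S'.

End FreeGroup.

(* Write a = h1|_S and b = h2|_S; restriction is a homomorphism and a|_S' = h1|_S'
   for S' containing S.  If a or b is 0 both claims are immediate.  Otherwise
   g1 S = g2 S = hang, and it suffices to show that a + b = 0, or [a,b] = 0, forces
   a|_S' = 0 <-> b|_S' = 0 for all S', contradicting the hypothesis at some S'.
   For a + b = 0 this holds since a = -b.  If a and b commute, conjugate a to a
   cyclically reduced word c and b to a reduced word t: then c or -c commutes with t
   letter by letter, so both are powers of a common word z (Lyndon-Schuetzenberger),
   and z^i|_S' = 0 <-> z|_S' = 0 because F(V) is torsion-free.  In the disjoint case
   S' = S :|: V1 separates g1 and g2. *)

From mathcomp Require Import all_boot zify.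
Set Implicit Arguments. Unset Strict Implicit. Unset Printing Implicit Defensive.

Section Catn.
Variable T : Type.
Implicit Types s x y : seq T.

Definition catn s n := flatten (nseq n s).

Lemma catnS s n : catn s n.+1 = s ++ catn s n. Proof. by []. Qed.

Lemma catnD s m n : catn s (m + n) = catn s m ++ catn s n.
Proof. by elim: m => // m IH; rewrite addSn !catnS IH catA. Qed.

Lemma catnSr s n : catn s n.+1 = catn s n ++ s.
Proof. by rewrite -addn1 catnD /catn /= cats0. Qed.

Lemma filter_catn (p : pred T) s n : filter p (catn s n) = catn (filter p s) n.
Proof. by elim: n => //= n IH; rewrite filter_cat IH. Qed.

Lemma cat_commute_catn x y :
  x ++ y = y ++ x -> exists z i j, x = catn z i /\ y = catn z j.
Proof.
have [n] := ubnP (size x + size y); elim: n x y => // n IH x y.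
rewrite ltnS => le_n Exy.
wlog le_xy : x y Exy le_n / size x <= size y.
  move=> W; case: (leqP (size x) (size y)) => [|/ltnW le_yx]; first exact: W.
  rewrite addnC in le_n.
  by have [z [i [j [-> ->]]]] := W y x (esym Exy) le_n le_yx; exists z, j, i.
case: (posnP (size x)) => [/size0nil ->|x_pos].
  by exists y, 0, 1; rewrite /catn /= cats0.
set y' := drop (size x) y.
have Ey : y = x ++ y'.
  by rewrite -{1}(cat_take_drop (size x) y) -(takel_cat x le_xy) -Exy take_size_cat.
have Exy' : x ++ y' = y' ++ x.
  by have := congr1 (drop (size x)) Exy; rewrite Ey -catA !drop_size_cat.
have lt_n : size x + size y' < n.
  by move: le_n; rewrite Ey size_cat; lia.
have [z [i [j [Ex Ey']]]] := IH x y' lt_n Exy'.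
by exists z, i, (i + j); rewrite Ey catnD -Ex -Ey'.
Qed.

End Catn.

Section FreeGroupWords.
Variable V : finType.
Implicit Types (x y : letter V) (a b c h r s t u v w st : word V) (S : {set V}).

Definition nocancel x y := y != linv x.
Definition reduced w := sorted nocancel w.
Definition cyc_reduced w := reduced (w ++ w).

Lemma linvK : involutive (@linv V).
Proof. by case=> a b; rewrite /linv /= negbK. Qed.

Lemma linv_eq x y : (y == linv x) = (x == linv y).
Proof. by apply/eqP/eqP => ->; rewrite linvK. Qed.

Lemma linv_neq x : x != linv x.
Proof. by case: x => a b; rewrite /linv xpair_eqE eqxx /=; case: b. Qed.

Lemma nocancelC x y : nocancel x y = nocancel y x.
Proof. by rewrite /nocancel linv_eq. Qed.

Lemma reduced_cons2 x y t : reduced [:: x, y & t] = (y != linv x) && reduced (y :: t).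
Proof. by []. Qed.

Lemma reduced_rev s : reduced (rev s) = reduced s.
Proof.
by rewrite /reduced rev_sorted; case: s => //= x s; apply: eq_path => y z; apply: nocancelC.
Qed.

Lemma reduced_fopp s : reduced (fopp s) = reduced s.
Proof.
rewrite /fopp reduced_rev /reduced sorted_map.
by case: s => //= x s; apply: eq_path => y z; rewrite /= /nocancel (can_eq linvK).
Qed.

Lemma reduced_cat_cons s x t :
  reduced (s ++ x :: t) = reduced (rcons s x) && reduced (x :: t).
Proof. exact: sorted_cat_cons. Qed.

Lemma reduced_cat3 s x t r :
  reduced (s ++ (x :: t) ++ r) =
  [&& reduced (rcons s x), reduced (x :: t) & reduced (last x t :: r)].
Proof.
rewrite cat_cons reduced_cat_cons -cat_cons lastI cat_rcons reduced_cat_cons.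
by rewrite -lastI.
Qed.

Lemma cyc_reducedW c : cyc_reduced c -> reduced c.
Proof. by case/(cat_sorted2 (leT := nocancel)). Qed.

Lemma cyc_reduced_cons x c : cyc_reduced (x :: c) = reduced (rcons (x :: c) x).
Proof.
rewrite /cyc_reduced reduced_cat_cons.
apply/andP/idP => [[] //|red_cx]; split=> //.
by move: red_cx; rewrite /reduced /= rcons_path => /andP[].
Qed.

Lemma red_step_reduced st x : reduced st -> reduced (red_step st x).
Proof.
case: st => [|y st] //=; case: ifP => [_ /path_sorted //|/negbT n_yx red_yst].
by rewrite /reduced /= -[nocancel x y]/(y != linv x) n_yx.
Qed.

Lemma foldl_red_step_reduced st w : reduced st -> reduced (foldl (@red_step V) st w).
Proof. by elim: w st => //= x w IH st /(red_step_reduced x); apply: IH. Qed.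

Lemma reduce_reduced w : reduced (reduce w).
Proof. by rewrite /reduce reduced_rev; apply: foldl_red_step_reduced. Qed.

Lemma foldl_red_step_id st w :
  reduced (rev w ++ st) -> foldl (@red_step V) st w = rev w ++ st.
Proof.
elim: w st => //= x w IH st; rewrite rev_cons cat_rcons => red_wst.
suff -> : red_step st x = x :: st by rewrite IH.
case: st red_wst => //= y st; rewrite reduced_cat_cons /reduced /= => /andP[_ /andP[]].
by move=> /negbTE ->.
Qed.

Lemma reduce_id w : reduced w -> reduce w = w.
Proof. by move=> red_w; rewrite /reduce foldl_red_step_id ?cats0 ?revK ?reduced_rev. Qed.

Lemma red_step_cancel st x :
  reduced st -> red_step (red_step st x) (linv x) = st.
Proof.
case: st => [|y st] /=; first by rewrite linvK eqxx.
case: ifP => [/eqP -> | _ _]; last by rewrite /= linvK eqxx.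
by case: st => [|z st] //= /andP[]; rewrite /nocancel linvK => /negbTE ->.
Qed.

Lemma foldl_red_step_reduce st w :
  reduced st -> foldl (@red_step V) st (reduce w) = foldl (@red_step V) st w.
Proof.
move=> red_st; elim/last_ind: w => [|w x IH] //.
rewrite /reduce !foldl_rcons -IH /reduce.
have : reduced (foldl (@red_step V) [::] w) by apply: foldl_red_step_reduced.
case: (foldl _ [::] w) => [|y r] //= red_yr; case: ifP => [/eqP ->|_].
  have red_F : reduced (foldl (@red_step V) st (rev r)).
    exact: foldl_red_step_reduced.
  by rewrite rev_cons foldl_rcons -{2}[x]linvK red_step_cancel.
by rewrite [rev (x :: _)]rev_cons foldl_rcons.
Qed.

Lemma reduce_cat3 u v t : reduce (u ++ reduce v ++ t) = reduce (u ++ v ++ t).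
Proof.
rewrite /reduce !foldl_cat foldl_red_step_reduce //.
exact: foldl_red_step_reduced.
Qed.

Lemma reduce_catl u t : reduce (reduce u ++ t) = reduce (u ++ t).
Proof. exact: (reduce_cat3 [::]). Qed.

Lemma reduce_catr u v : reduce (u ++ reduce v) = reduce (u ++ v).
Proof. by rewrite -[reduce v]cats0 reduce_cat3 cats0. Qed.

Lemma reduce_cat0 u a t : fzero a -> reduce (u ++ a ++ t) = reduce (u ++ t).
Proof. by move/eqP=> a0; rewrite -reduce_cat3 a0. Qed.

Lemma fzero_pair x : fzero [:: x; linv x].
Proof. by rewrite /fzero /reduce /= linvK eqxx. Qed.

Lemma reduce_pair u v x : reduce (u ++ x :: linv x :: v) = reduce (u ++ v).
Proof. exact: (reduce_cat0 u v (fzero_pair x)). Qed.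

Lemma size_foldl_red_step st w :
  size (foldl (@red_step V) st w) <= size st + size w.
Proof.
elim: w st => [|x w IH] st /=; first by rewrite addn0.
apply: leq_trans (IH _) _; rewrite addnS -addSn leq_add2r.
by case: st => [|y st] //=; case: ifP => // _; apply: leqW.
Qed.

Lemma size_reduce w : size (reduce w) <= size w.
Proof. by rewrite /reduce size_rev; apply: size_foldl_red_step. Qed.

Lemma size_reduce_lt w : ~~ reduced w -> size (reduce w) < size w.
Proof.
elim: w => [|x w IH] //; case: w IH => [|y w] IH //.
rewrite /reduced /= negb_and; case/orP=> [/negPn/eqP ->|/IH lt_w].
  rewrite -[_ :: _]cat0s reduce_pair /=.
  by apply: leq_trans (size_reduce w) _; apply: leqW.
rewrite -cat1s -reduce_catr.
by apply: leq_ltn_trans (size_reduce _) _; rewrite /= ltnS.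
Qed.

Lemma reduced_eq_size s t :
  reduce s = reduce t -> size s = size t -> reduced s = reduced t.
Proof.
suff red_to : forall s t, reduce s = reduce t -> size s = size t ->
    reduced s -> reduced t.
  by move=> Est Sst; apply/idP/idP; apply: red_to.
move=> {}s {}t Est Sst red_s; apply: contraT => /size_reduce_lt.
by rewrite -Est reduce_id // Sst ltnn.
Qed.

Lemma invariant_reduce (T : Type) (P : word V -> T) :
  (forall u v x, P (u ++ x :: linv x :: v) = P (u ++ v)) ->
  forall w, P (reduce w) = P w.
Proof.
move=> P_pair w; rewrite /reduce.
suff P_st st : P (rev (foldl (@red_step V) st w)) = P (rev st ++ w) by rewrite P_st.
elim: w st => [|x w IH] st /=; first by rewrite cats0.
rewrite IH; case: st => [|y st] //=; case: ifP => [/eqP ->|_].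
  by rewrite rev_cons cat_rcons -{2}[x]linvK P_pair.
by rewrite [rev (x :: _)]rev_cons cat_rcons.
Qed.

Lemma fopp_cons x w : fopp (x :: w) = rcons (fopp w) (linv x).
Proof. by rewrite /fopp rev_cons. Qed.

Lemma fopp_rcons w x : fopp (rcons w x) = linv x :: fopp w.
Proof. by rewrite /fopp map_rcons rev_rcons. Qed.

Lemma fopp_cat u w : fopp (u ++ w) = fopp w ++ fopp u.
Proof. by rewrite /fopp map_cat rev_cat. Qed.

Lemma foppK : involutive (@fopp V).
Proof. by move=> w; rewrite /fopp map_rev revK -map_comp (eq_map linvK) map_id. Qed.

Lemma reduce_addN w : reduce (w ++ fopp w) = [::].
Proof.
elim: w => // x w IH.
rewrite fopp_cons -cats1 -cat1s -!catA (catA w) reduce_cat0 ?/fzero ?IH //.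
exact/eqP/fzero_pair.
Qed.

Lemma reduce_Nadd w : reduce (fopp w ++ w) = [::].
Proof. by rewrite -{2}[w]foppK reduce_addN. Qed.

Lemma reduce_cat0l a b : fzero a -> reduce (a ++ b) = reduce b.
Proof. exact: (reduce_cat0 [::]). Qed.

Lemma reduce_cat0r a b : fzero b -> reduce (a ++ b) = reduce a.
Proof. by move=> b0; rewrite -[a ++ b]cats0 -catA reduce_cat0 // cats0. Qed.

Lemma fzero_cat0l a b : fzero a -> fzero (a ++ b) = fzero b.
Proof. by move=> a0; rewrite /fzero reduce_cat0l. Qed.

Lemma fzero_cat0r a b : fzero b -> fzero (a ++ b) = fzero a.
Proof. by move=> b0; rewrite /fzero reduce_cat0r. Qed.

Lemma fzero_sub s t : fzero (s ++ fopp t) = (reduce s == reduce t).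
Proof.
apply/eqP/eqP => [st0|Est]; last by rewrite -reduce_catl Est reduce_catl reduce_addN.
have Nt0 : fzero (fopp t ++ t) by rewrite /fzero reduce_Nadd.
by rewrite -(reduce_cat0r s Nt0) catA -reduce_catl st0.
Qed.

Lemma fzero_opp w : fzero (fopp w) = fzero w.
Proof. by rewrite -[fopp w]cat0s fzero_sub eq_sym. Qed.

Lemma fzero_cat_eq a b : fzero (a ++ b) -> fzero a = fzero b.
Proof.
by rewrite -[b]foppK fzero_sub fzero_opp /fzero => /eqP ->.
Qed.

Lemma reduce_conj u w : reduce (fopp u ++ (u ++ w ++ fopp u) ++ u) = reduce w.
Proof.
have Nu0 : fzero (fopp u ++ u) by rewrite /fzero reduce_Nadd.
by rewrite -!catA catA reduce_cat0l // reduce_cat0r.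
Qed.

Lemma fzero_conj u w : fzero (u ++ w ++ fopp u) = fzero w.
Proof.
apply/idP/idP => w0; last by rewrite /fzero reduce_cat0 // reduce_addN.
by rewrite /fzero -(reduce_conj u) -reduce_cat3 (eqP w0) reduce_Nadd.
Qed.

Lemma fzero_fcomm a b : fzero (fcomm a b) = (reduce (a ++ b) == reduce (b ++ a)).
Proof. by rewrite /fcomm /fadd -catA -fopp_cat fzero_sub. Qed.

Lemma frestr_cat u v S : frestr (u ++ v) S = frestr u S ++ frestr v S.
Proof. exact: filter_cat. Qed.

Lemma frestr_fopp w S : frestr (fopp w) S = fopp (frestr w S).
Proof. by rewrite /frestr /fopp filter_rev filter_map. Qed.

Lemma frestr_catn w n S : frestr (catn w n) S = catn (frestr w S) n.
Proof. exact: filter_catn. Qed.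

Lemma frestr_fcomm a b S : frestr (fcomm a b) S = fcomm (frestr a S) (frestr b S).
Proof. by rewrite /fcomm /fadd !frestr_cat !frestr_fopp. Qed.

Lemma frestr_frestr h (S S' : {set V}) :
  S \subset S' -> frestr (frestr h S) S' = frestr h S'.
Proof.
move=> sub; rewrite /frestr -filter_predI; apply: eq_filter => x /=.
by case: (boolP (x.1 \in S')) => //= /negP S'x; apply/negP => /(subsetP sub).
Qed.

Lemma reduce_frestr w S : reduce (frestr (reduce w) S) = reduce (frestr w S).
Proof.
apply: (@invariant_reduce _ (fun w => reduce (frestr w S))) => u v x.
by rewrite !frestr_cat /=; case: (x.1 \notin S) => //; apply: reduce_pair.
Qed.

Lemma fzero_frestr_reduce w S : fzero (frestr (reduce w) S) = fzero (frestr w S).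
Proof. by rewrite /fzero reduce_frestr. Qed.

Lemma fzero_frestr w S : fzero w -> fzero (frestr w S).
Proof. by rewrite -fzero_frestr_reduce /fzero => /eqP ->. Qed.

Lemma fzero_frestr_conj u w S :
  fzero (frestr (fopp u ++ w ++ u) S) = fzero (frestr w S).
Proof. by rewrite !frestr_cat frestr_fopp -{2}(foppK (frestr u S)) fzero_conj. Qed.

Lemma fzero_frestr_cat a b S : fzero (a ++ b) -> fzero (frestr a S) = fzero (frestr b S).
Proof. by move/(fzero_frestr S); rewrite frestr_cat => /fzero_cat_eq. Qed.

Lemma reduced_catn c n : cyc_reduced c -> reduced (catn c n).
Proof.
move=> cyc_c; elim: n => [|n IH] //; rewrite catnS.
case: n IH => [|n] IH; first by rewrite /catn /= cats0; apply: cyc_reducedW.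
case: c cyc_c IH => [|x c] // cyc_c IH.
by rewrite [catn _ n.+1]catnS [_ ++ catn _ n]cat_cons reduced_cat_cons -cyc_reduced_cons cyc_c.
Qed.

Lemma cyc_reduced_decomp r :
  reduced r -> exists u c, r = u ++ c ++ fopp u /\ cyc_reduced c.
Proof.
have [n] := ubnP (size r); elim: n r => // n IH r.
case: r => [|x r] lt_n red_r; first by exists [::], [::].
case/lastP: r lt_n red_r => [|r y] lt_n red_r.
  by exists [::], [:: x]; rewrite /cyc_reduced cat1s reduced_cons2 linv_neq.
have [y_x|n_yx] := eqVneq y (linv x).
  have red_r' : reduced r by move: red_r => /path_sorted; rewrite -cats1 => /cat_sorted2[].
  have lt_r : size r < n by move: lt_n; rewrite /= size_rcons ltnS => /ltnW.
  have [u [c [-> cyc_c]]] := IH r lt_r red_r'.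
  by exists (x :: u), c; rewrite y_x fopp_cons -!cats1 -!catA.
exists [::], (x :: rcons r y); split; first by rewrite cats0.
have red_xr : path nocancel x (rcons r y) := red_r.
by rewrite cyc_reduced_cons /reduced /= rcons_path red_xr last_rcons /nocancel -linv_eq.
Qed.

Lemma reduced_addN_nil u : reduced (u ++ fopp u) -> u = [::].
Proof.
case/lastP: u => [|u x] //; rewrite fopp_rcons cat_rcons reduced_cat_cons.
by rewrite /reduced /= /nocancel eqxx andbF.
Qed.

Lemma reduce_catn w k : reduce (catn (reduce w) k) = reduce (catn w k).
Proof. by elim: k => // k IH; rewrite !catnS -reduce_catr IH reduce_catr reduce_catl. Qed.

Lemma reduce_catn_conj u c k :
  reduce (catn (u ++ c ++ fopp u) k) = reduce (u ++ catn c k ++ fopp u).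
Proof.
elim: k => [|k IH]; first by rewrite /catn /= reduce_addN.
rewrite catnS -reduce_catr IH reduce_catr.
have -> : (u ++ c ++ fopp u) ++ u ++ catn c k ++ fopp u =
          (u ++ c) ++ (fopp u ++ u) ++ (catn c k ++ fopp u) by rewrite !catA.
by rewrite reduce_cat0 ?/fzero ?reduce_Nadd // catnS !catA.
Qed.

Lemma fzero_catn w k : 0 < k -> fzero (catn w k) = fzero w.
Proof.
case: k => // k _; apply/idP/idP => [|w0]; rewrite /fzero -reduce_catn; last first.
  by rewrite (eqP w0); elim: k.+1.
have [u [c [Ew cyc_c]]] := cyc_reduced_decomp (reduce_reduced w).
have := reduce_reduced w; rewrite Ew reduce_catn_conj.
case: c cyc_c {Ew} => [|x c] cyc_c red_ucu.
  by rewrite (reduced_addN_nil red_ucu).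
rewrite reduce_id; first by case: u {red_ucu}.
have last_catn : last x (c ++ catn (x :: c) k) = last x c.
  by rewrite -[LHS]/(last x (catn (x :: c) k.+1)) catnSr last_cat.
move: red_ucu; rewrite -[catn _ k.+1]/(x :: (c ++ catn (x :: c) k)) !reduced_cat3 last_catn.
by case/and3P=> -> _ ->; rewrite andbT (reduced_catn k.+1 cyc_c).
Qed.

Lemma fzero_frestr_cat_commute s t S :
  s ++ t = t ++ s -> s != [::] -> t != [::] ->
  fzero (frestr s S) = fzero (frestr t S).
Proof.
move=> /cat_commute_catn[z [[|i] [[|j] [-> ->]]]] // _ _.
by rewrite !frestr_catn !fzero_catn.
Qed.

Lemma reduce_commute_opp c t :
  reduce (c ++ t) = reduce (t ++ c) -> reduce (fopp c ++ t) = reduce (t ++ fopp c).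
Proof.
have cN0 : fzero (c ++ fopp c) by rewrite /fzero reduce_addN.
have Nc0 : fzero (fopp c ++ c) by rewrite /fzero reduce_Nadd.
move=> Ect; transitivity (reduce (fopp c ++ (t ++ c) ++ fopp c)).
  have -> : fopp c ++ (t ++ c) ++ fopp c = (fopp c ++ t) ++ (c ++ fopp c) ++ [::].
    by rewrite cats0 !catA.
  by rewrite reduce_cat0 // cats0.
rewrite -reduce_cat3 -Ect reduce_cat3.
have -> : fopp c ++ (c ++ t) ++ fopp c = [::] ++ (fopp c ++ c) ++ (t ++ fopp c).
  by rewrite !catA.
by rewrite reduce_cat0.
Qed.

Lemma cyc_reduced_commute c t :
  cyc_reduced c -> reduced t -> c != [::] -> t != [::] ->
  reduce (c ++ t) = reduce (t ++ c) ->
  exists2 s, s ++ t = t ++ s & s = c \/ s = fopp c.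
Proof.
move=> cyc_c red_t c_nil t_nil Ect.
have commute_of_reduced (s1 s2 : word V) : reduced (s1 ++ s2) -> reduced (s2 ++ s1) ->
    reduce (s1 ++ s2) = reduce (s2 ++ s1) -> s1 ++ s2 = s2 ++ s1.
  by move=> red12 red21; rewrite !reduce_id.
have size_ct : size (c ++ t) = size (t ++ c) by rewrite !size_cat addnC.
case red_ct: (reduced (c ++ t)).
  exists c; last by left.
  have red_tc : reduced (t ++ c) by rewrite -(reduced_eq_size Ect size_ct).
  exact: commute_of_reduced.
have red_tc : reduced (t ++ c) = false by rewrite -(reduced_eq_size Ect size_ct).
exists (fopp c); last by right.
case: c c_nil cyc_c red_ct red_tc Ect {size_ct} => [|x c] // _ cyc_c red_ct red_tc Ect.
case: t t_nil red_t red_ct red_tc Ect => [|y t] // _ red_t red_ct red_tc Ect.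
have red_c : reduced (x :: c) := cyc_reducedW cyc_c.
have l_x : linv (last x c) != x.
  move: cyc_c; rewrite /cyc_reduced -[_ ++ _]cat0s reduced_cat3 reduced_cons2.
  by rewrite eq_sym => /and3P[_ _ /andP[]].
have y_l : y = linv (last x c).
  move: red_ct; rewrite -[_ ++ _]cat0s reduced_cat3 reduced_cons2 red_c red_t.
  by rewrite andbT => /negbFE/eqP.
have x_l : last y t = linv x.
  move: red_tc; rewrite -[_ ++ _]cat0s reduced_cat3 reduced_cons2 red_c red_t.
  by rewrite andbT => /negbFE/eqP ->; rewrite linvK.
have Ec : fopp (x :: c) = linv (last x c) :: fopp (belast x c).
  by rewrite lastI fopp_rcons.
have last_Ec : last (linv (last x c)) (fopp (belast x c)) = linv x.
  by rewrite -[LHS]/(last x (linv (last x c) :: fopp (belast x c))) -Ec fopp_cons last_rcons.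
apply: commute_of_reduced (reduce_commute_opp Ect).
  rewrite -[_ ++ _]cat0s Ec reduced_cat3 -Ec last_Ec reduced_cons2 reduced_fopp.
  by rewrite red_c linvK {1}y_l l_x red_t.
rewrite -[_ ++ _]cat0s reduced_cat3 x_l Ec reduced_cons2 -Ec reduced_fopp.
by rewrite red_t red_c linvK l_x.
Qed.

Lemma reduce_conj_cat u a b :
  reduce ((fopp u ++ a ++ u) ++ (fopp u ++ b ++ u)) = reduce (fopp u ++ (a ++ b) ++ u).
Proof.
have uN0 : fzero (u ++ fopp u) by rewrite /fzero reduce_addN.
have -> : (fopp u ++ a ++ u) ++ (fopp u ++ b ++ u) =
          (fopp u ++ a) ++ (u ++ fopp u) ++ (b ++ u) by rewrite !catA.
by rewrite reduce_cat0 // !catA.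
Qed.

Lemma fzero_frestr_commute a b S :
  ~~ fzero a -> ~~ fzero b -> reduce (a ++ b) = reduce (b ++ a) ->
  fzero (frestr a S) = fzero (frestr b S).
Proof.
move=> a_n0 b_n0 Eab.
have [u [c [Ea cyc_c]]] := cyc_reduced_decomp (reduce_reduced a).
pose conj w := fopp u ++ w ++ u.
have Ec : reduce (conj a) = c.
  by rewrite /conj -reduce_cat3 Ea reduce_conj reduce_id ?cyc_reducedW.
have c_nil : c != [::].
  apply: contra a_n0 => /eqP c0; have := reduce_reduced a.
  by rewrite /fzero Ea c0 => /reduced_addN_nil ->.
have conj_b_n0 : reduce (conj b) != [::].
  by rewrite -/(fzero _) /conj -{2}(foppK u) fzero_conj.
have Ecb : reduce (c ++ reduce (conj b)) = reduce (reduce (conj b) ++ c).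
  rewrite -Ec !reduce_catl !reduce_catr /conj !reduce_conj_cat.
  by rewrite -reduce_cat3 Eab reduce_cat3.
have [s Esb Es] := cyc_reduced_commute cyc_c (reduce_reduced _) c_nil conj_b_n0 Ecb.
have s_nil : s != [::].
  by case: Es => ->; rewrite // -size_eq0 size_rev size_map size_eq0.
rewrite -(fzero_frestr_conj u) -(fzero_frestr_conj u b) -/(conj a) -/(conj b).
rewrite -fzero_frestr_reduce Ec -[in RHS]fzero_frestr_reduce.
rewrite -(fzero_frestr_cat_commute S Esb s_nil conj_b_n0).
by case: Es => ->; rewrite // frestr_fopp fzero_opp.
Qed.

End FreeGroupWords.

Lemma solvesE (V : finType) (h : word V) (g : {set V} -> bool) :
  solves h g -> forall S, fzero (frestr h S) = g S.
Proof. by move=> sol S; rewrite sol eqb_id. Qed.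

Section Solutions.
Variables (V : finType) (g1 g2 : {set V} -> bool) (h1 h2 : word V).
Hypotheses (sol1 : solves h1 g1) (sol2 : solves h2 g2) (sep : sep_hyp g1 g2).

Lemma frestr_separated S :
  ~~ fzero (frestr h1 S) -> ~~ fzero (frestr h2 S) ->
  ~ (forall S', fzero (frestr (frestr h1 S) S') = fzero (frestr (frestr h2 S) S')).
Proof.
rewrite !(solvesE sol1, solvesE sol2) => /negbTE g1S /negbTE g2S Eh.
have [S' [sub]] := sep g1S g2S.
rewrite -(solvesE sol1) -(solvesE sol2).
by rewrite -(frestr_frestr h1 sub) -(frestr_frestr h2 sub) Eh eqxx.
Qed.

Lemma solves_meet : solves (fadd h1 h2) (spec_meet g1 g2).
Proof.
move=> S; rewrite /spec_meet eqb_id -(solvesE sol1) -(solvesE sol2) frestr_cat.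
have [a0|a_n0] := boolP (fzero (frestr h1 S)); first by rewrite fzero_cat0l.
have [b0|b_n0] := boolP (fzero (frestr h2 S)); first by rewrite fzero_cat0r // (negbTE a_n0).
apply/negbTE/negP => ab0; apply: (frestr_separated a_n0 b_n0) => S'.
exact: fzero_frestr_cat.
Qed.

Lemma solves_join : solves (fcomm h1 h2) (spec_join g1 g2).
Proof.
move=> S; rewrite /spec_join eqb_id -(solvesE sol1) -(solvesE sol2).
rewrite frestr_fcomm fzero_fcomm.
have [a0|a_n0] := boolP (fzero (frestr h1 S)).
  by rewrite reduce_cat0l // reduce_cat0r // eqxx.
have [b0|b_n0] := boolP (fzero (frestr h2 S)).
  by rewrite reduce_cat0r // reduce_cat0l // eqxx.
apply/negbTE/eqP => Eab; apply: (frestr_separated a_n0 b_n0) => S'.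
exact: fzero_frestr_commute.
Qed.

End Solutions.

Lemma sep_hyp_disjoint (V : finType) (V1 V2 : {set V}) (f1 f2 g1 g2 : {set V} -> bool) :
  [disjoint V1 & V2] -> f1 V1 = fall ->
  (forall S, g1 S = f1 (S :&: V1)) -> (forall S, g2 S = f2 (S :&: V2)) ->
  sep_hyp g1 g2.
Proof.
move=> dis f1V1 Eg1 Eg2 S _ g2S; exists (S :|: V1); split; first exact: subsetUl.
rewrite Eg1 Eg2 !setIUl setIid (setUidPr (subsetIr S V1)).
by rewrite (disjoint_setI0 dis) setU0 -Eg2 g2S f1V1.
Qed.

Theorem lemma2 (V : finType) (g1 g2 : {set V} -> bool) :
  is_spec g1 -> is_spec g2 ->
  (forall h1 h2 : word V, solves h1 g1 -> solves h2 g2 -> sep_hyp g1 g2 ->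
     solves (fadd h1 h2) (spec_meet g1 g2) /\
     solves (fcomm h1 h2) (spec_join g1 g2)) /\
  (forall (V1 V2 : {set V}) (f1 f2 : {set V} -> bool),
     [disjoint V1 & V2] -> V1 :|: V2 = setT ->
     is_spec_on V1 f1 -> is_spec_on V2 f2 ->
     (forall S, g1 S = f1 (S :&: V1)) -> (forall S, g2 S = f2 (S :&: V2)) ->
     sep_hyp g1 g2).
Proof.
move=> _ _; split=> [h1 h2 sol1 sol2 sep | V1 V2 f1 f2 dis _ [_ f1V1] _].
  by split; [apply: solves_meet | apply: solves_join].
exact: sep_hyp_disjoint.
Qed.
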